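(* In the lower-bound instance for CTS-G described in the context, for any round $t>T/2$ and any sub-optimal base arm $a\in B_t$, we have $\Pr(w_{a,t}\ge\tau\mid\mathcal{F}_{t-1})\ge0.15$, where $\tau:=\Delta+\Delta/4$.
   Context: Top-$m$ instance: $N$ base arms with $N\ge400m$, $m\ge1$; every round any $m$ of the $N$ arms may be played. A set $G\subset[N]$ with $|G|=m$ is fixed; rewards are deterministic: $r_a=\Delta$ for $a\in G$ and $r_a=0$ otherwise, with $\Delta:=\frac45\sqrt{\frac{N\ln T}{T}}$ and $T>\frac{16}{25}N\ln T$. The agent runs CTS-G with $\gamma=1$: in round $t$ draw independently $w_{a,t}\sim\mathcal{N}\big(\hat r_{a,n_{a,t}},\frac{m\ln t}{n_{a,t}+1}\big)$ and play the $m$ arms with largest $w_{a,t}$; $n_{a,t}$ is the number of plays of $a$ in rounds $1,\dots,t-1$, $\hat r_{a,n_{a,t}}$ its empirical mean ($0$ if unplayed). $\mathcal{F}_{t-1}$ is the history up to the end of round $t-1$. $L:=\frac{16m\ln(T/2)}{25\Delta^2}-1$ and $B_t:=\{a\in[N]\setminus G: n_{a,t}\le L\}$. *)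

From HB Require Import structures.
From mathcomp Require Import all_boot all_order all_algebra.
From mathcomp Require Import all_classical all_reals all_analysis.
From mathcomp Require Import normal_distribution.
Set Implicit Arguments. Unset Strict Implicit. Unset Printing Implicit Defensive.
Import Order.TTheory GRing.Theory Num.Theory.
Local Open Scope ring_scope.

Definition gapDelta {R : realType} (N T : nat) : R :=
  4 / 5 * Num.sqrt (N%:R * ln (T%:R : R) / T%:R).

Definition Lbound {R : realType} (m N T : nat) : R :=
  16 * m%:R * ln (T%:R / 2 : R) / (25 * (gapDelta N T) ^+ 2) - 1.

Definition reward {R : realType} (N : nat) (G : {set 'I_N}) (Delta : R)
  (a : 'I_N) : R := if a \in G then Delta else 0.

(* S s = set of m arms played in round s (s = 1, 2, ...).
   n_{a,t} = number of plays of a in rounds 1..t-1. *)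
Definition npulls (N : nat) (S : nat -> {set 'I_N}) (a : 'I_N) (t : nat) : nat :=
  \sum_(1 <= s < t | a \in S s) 1.

Definition emp_mean {R : realType} (N : nat) (G : {set 'I_N}) (Delta : R)
  (S : nat -> {set 'I_N}) (a : 'I_N) (t : nat) : R :=
  if npulls S a t == 0%N then 0
  else (\sum_(1 <= s < t | a \in S s) reward G Delta a) / (npulls S a t)%:R.

(* Conditional law of w_{a,t} given F_{t-1} under CTS-G with gamma = 1:
   N(hat r_{a,n_{a,t}}, m ln t / (n_{a,t} + 1)); normal_prob takes the
   mean and the standard deviation. *)
Definition ctsg_sample_law {R : realType} (N m : nat) (G : {set 'I_N}) (Delta : R)
  (S : nat -> {set 'I_N}) (a : 'I_N) (t : nat) : set R -> \bar R :=
  normal_prob (emp_mean G Delta S a t)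
    (Num.sqrt (m%:R * ln (t%:R : R) / (npulls S a t).+1%:R)).

(* Since [a] is suboptimal its empirical mean is 0, so [w_{a,t}] is a centred
   Gaussian with standard deviation [sigma = sqrt (m ln t / (n_{a,t} + 1))].
   The constraint [n_{a,t} <= L] together with [ln (T/2) <= ln t] gives
   [tau = 5 Delta / 4 <= sigma], so it suffices that a centred Gaussian exceeds
   one standard deviation with probability at least 0.15 (the true value is
   about 0.1587).  By symmetry this probability is [1/2 - P (0 <= X < sigma)],
   and the last term is at most
   [(1 - 1/6 + 1/40 - 1/336 + 1/3456) / sqrt (2 pi) <= 0.35], by the
   alternating-series bound [exp (- y) <= 1 - y + y^2/2 - y^3/6 + y^4/24] and
   [pi >= 3]; the latter follows from [cos (3/2) > 0]. *)

From HB Require Import structures.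
From mathcomp Require Import all_boot all_order all_algebra.
From mathcomp Require Import all_classical all_reals all_analysis.
From mathcomp Require Import normal_distribution measurable_realfun.
From mathcomp Require Import lra ring zify.
Set Implicit Arguments.
Unset Strict Implicit.
Unset Printing Implicit Defensive.
Import Order.TTheory GRing.Theory Num.Theory.
Import numFieldNormedType.Exports.
Local Open Scope ring_scope.
Local Open Scope classical_set_scope.

Lemma cos_coeff'_pair_gt0 (R : realType) (x : R) k : x != 0 -> ~~ odd k ->
  x ^+ 2 < (k.*2.+1 * k.*2.+2)%:R -> 0 < cos_coeff' x k + cos_coeff' x k.+1.
Proof.
move=> x0 k_even; rewrite natrM /cos_coeff' -!exprnP.
rewrite [(-1) ^+ k.+1]exprS -signr_odd (negbTE k_even) expr0 mulr1 mul1r.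
rewrite doubleS !factS !natrM [x ^+ k.*2.+2]exprS [x ^+ k.*2.+1]exprS.
set a := x ^+ k.*2; set F := (k.*2)`!%:R.
set c1 := k.*2.+1%:R; set c2 := k.*2.+2%:R => xlt.
have a0 : 0 < a by rewrite exprn_even_gt0 ?odd_double // x0 orbT.
have F0 : 0 < F by rewrite ltr0n fact_gt0.
have c1_gt0 : 0 < c1 by rewrite ltr0n.
have c2_gt0 : 0 < c2 by rewrite ltr0n.
clearbody a F c1 c2.
have -> : a / F + -1 * (x * (x * a)) / (c2 * (c1 * F)) = a / F * (1 - x ^+ 2 / (c1 * c2)).
  by field; rewrite !gt_eqF.
apply: mulr_gt0; first exact: divr_gt0.
by rewrite subr_gt0 ltr_pdivrMr ?mul1r // mulr_gt0.
Qed.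

Lemma cos_three_halves_gt0 (R : realType) : 0 < cos (3 / 2 : R).
Proof.
have h := @cvg_cos_coeff' R (3 / 2); rewrite -(cvg_lim (@Rhausdorff R) h).
apply: (@lt_trans _ _ (\sum_(0 <= i < 4) cos_coeff' (3 / 2 : R) i)).
  rewrite !big_nat_recr //= big_nil /cos_coeff' -!exprnP.
  rewrite (_ : 0`! = 1) // (_ : 2`! = 2) // (_ : 4`! = 24) // (_ : 6`! = 720) //.
  by rewrite !exprS !expr0; lra.
apply: lt_sum_lim_series => [|d]; first by move/cvgP: h.
apply: cos_coeff'_pair_gt0; first by apply/negP => /eqP; lra.
  by rewrite oddD odd_double.
apply: (@lt_le_trans _ _ 90%:R); first by rewrite expr2; lra.
by rewrite ler_nat -!addnn; lia.
Qed.

Lemma pi_ge3 (R : realType) : 3 <= (pi : R).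
Proof.
rewrite -subr_ge0 leNgt; apply/negP => pi_lt3.
have: 0 < sin (3 / 2 - pi / 2 : R).
  by apply: sin_gt0_pihalf; have := @pihalf_ge1 R; lra.
by rewrite sinBpihalf oppr_gt0 ltNge (ltW (cos_three_halves_gt0 R)).
Qed.

Lemma exp_coeff_pair_lt0 (R : realType) (y : R) k : odd k -> 0 < y < k.+1%:R ->
  exp_coeff (- y) k + exp_coeff (- y) k.+1 < 0.
Proof.
move=> k_odd /andP[y_gt0 y_lt].
have E i : exp_coeff (- y) i = (- y) ^+ i / i`!%:R by [].
rewrite !E !(exprNn y) [(-1) ^+ k.+1]exprS -signr_odd k_odd expr1.
rewrite factS natrM [y ^+ k.+1]exprS.
set a := y ^+ k; set F := k`!%:R; set c := k.+1%:R in y_lt *.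
have a_gt0 : 0 < a by rewrite exprn_gt0.
have F_gt0 : 0 < F by rewrite ltr0n fact_gt0.
have c_gt0 : 0 < c by rewrite ltr0n.
clearbody a F c.
have -> : -1 * a / F + -1 * -1 * (y * a) / (c * F) = - (a / F * (1 - y / c)).
  by field; rewrite !gt_eqF.
rewrite oppr_lt0; apply: mulr_gt0; first exact: divr_gt0.
by rewrite subr_gt0 ltr_pdivrMr // mul1r.
Qed.

Definition expN_taylor4 {R : realType} (y : R) : R :=
  1 - y + y ^+ 2 / 2 - y ^+ 3 / 6 + y ^+ 4 / 24.

Lemma expRN_le_taylor4 (R : realType) (y : R) : 0 <= y < 6 ->
  expR (- y) <= expN_taylor4 y.
Proof.
rewrite /expN_taylor4 => /andP[]; rewrite le_eqVlt => /predU1P[<- _|y_gt0 y_lt6].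
  by rewrite oppr0 expR0; lra.
rewrite -lerN2 /expR; have /cvgN h := is_cvg_series_exp_coeff (- y).
rewrite -(cvg_lim (@Rhausdorff R) h) -seriesN; apply: ltW.
apply: (@le_lt_trans _ _ (\sum_(0 <= i < 5) (- exp_coeff (- y)) i)).
  rewrite !big_nat_recr //= big_nil /exp_coeff /= !fctE /= !exprS !expr0.
  rewrite (_ : 0`! = 1) // (_ : 1`! = 1) // (_ : 2`! = 2) // (_ : 3`! = 6) //.
  by rewrite (_ : 4`! = 24) // le_eqVlt; apply/orP; left; apply/eqP; field.
apply: lt_sum_lim_series => [|d]; first by move/cvgP: h; rewrite seriesN.
rewrite -opprD oppr_gt0 exp_coeff_pair_lt0 ?y_gt0 //=.
  by rewrite oddD odd_double.
by apply: lt_le_trans y_lt6 _; rewrite (ler_nat R 6); lia.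
Qed.

Lemma integral_poly_deriv (R : realType) (P : {poly R}) (a b : R) : a < b ->
  (\int[lebesgue_measure]_(x in `[a, b]) (P^`().[x])%:E = (P.[b] - P.[a])%:E)%E.
Proof.
move=> ab; rewrite EFinB; apply: continuous_FTC2 => //.
- by apply/continuous_subspaceT => ?; exact: continuous_horner.
- split.
  + by move=> x _; exact: derivable_horner.
  + exact/cvg_at_right_filter/continuous_horner.
  + exact/cvg_at_left_filter/continuous_horner.
- by move=> x _; rewrite -derivE.
Qed.

Definition gauss_taylor_primitive {R : realType} (s : R) : {poly R} :=
  'X - (6 * s ^+ 2)^-1 *: 'X^3 + (40 * s ^+ 4)^-1 *: 'X^5
  - (336 * s ^+ 6)^-1 *: 'X^7 + (3456 * s ^+ 8)^-1 *: 'X^9.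

Lemma horner_deriv_gauss_taylor_primitive (R : realType) (s x : R) : s != 0 ->
  (gauss_taylor_primitive s)^`().[x] = expN_taylor4 (x ^+ 2 / (s ^+ 2 *+ 2)).
Proof. by move=> s0; rewrite !poly.derivE !hornerE /expN_taylor4 /=; field. Qed.

Lemma sqr_mul_normal_peak (R : realType) (s : R) : s != 0 ->
  (s * normal_peak s) ^+ 2 = (pi *+ 2)^-1.
Proof.
move=> s0; rewrite exprMn /normal_peak exprVn sqr_sqrtr; last first.
  by rewrite mulrn_wge0 // mulr_ge0 ?sqr_ge0 ?pi_ge0.
by rewrite -mulrnAr invfM mulrA mulfV ?mul1r // sqrf_eq0.
Qed.

Lemma normal_prob_itv0s_le (R : realType) (s : R) : 0 < s ->
  (normal_prob 0 s `[0%R, s[ <= (35 / 100 : R)%:E)%E.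
Proof.
rewrite /normal_prob => s_gt0; have s0 : s != 0 by rewrite gt_eqF.
have mpdf := measurable_normal_pdf 0 s.
set P := normal_peak s *: gauss_taylor_primitive s.
rewrite integral_itv_bndo_bndc; last exact/measurable_EFinP/measurable_funTS.
apply: (@le_trans _ _ (\int[lebesgue_measure]_(x in `[0%R, s]) (P^`().[x])%:E)%E).
  apply: ge0_le_integral => //.
  - by move=> x _; rewrite lee_fin normal_pdf_ge0.
  - exact/measurable_EFinP/measurable_funTS.
  - apply/measurable_EFinP/measurable_funTS.
    exact: continuous_measurable_fun (@continuous_horner R _).
  move=> x; rewrite /= in_itv /= => /andP[x_ge0 x_le_s].
  rewrite lee_fin derivZ hornerZ horner_deriv_gauss_taylor_primitive //.
  rewrite normal_pdfE // /normal_fun subr0 ler_wpM2l ?normal_peak_ge0 // mulNr.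
  apply: expRN_le_taylor4.
  have s2_gt0 : 0 < s ^+ 2 *+ 2 by rewrite mulrn_wgt0 // exprn_gt0.
  rewrite divr_ge0 ?sqr_ge0 ?ltW //= ltr_pdivrMr //.
  have : x ^+ 2 <= s ^+ 2 by rewrite ler_sqr ?nnegrE ?(ltW s_gt0).
  by rewrite mulr2n; lra.
rewrite integral_poly_deriv // lee_fin /P !hornerZ -mulrBr.
have -> : (gauss_taylor_primitive s).[s] - (gauss_taylor_primitive s).[0] =
    s * (1 - 1 / 6 + 1 / 40 - 1 / 336 + 1 / 3456).
  by rewrite !hornerE /=; field.
rewrite mulrA [normal_peak s * s]mulrC.
have sp_ge0 : 0 <= s * normal_peak s by rewrite mulr_ge0 ?normal_peak_ge0 // ltW.
have sp_le : (s * normal_peak s) ^+ 2 <= 6^-1.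
  have pi2_gt0 : 0 < pi *+ 2 :> R by rewrite mulrn_wgt0 // pi_gt0.
  rewrite sqr_mul_normal_peak // lef_pV2 ?posrE //.
  by have := pi_ge3 R; rewrite mulr2n; lra.
move: sp_ge0 sp_le; set q := s * normal_peak s => q_ge0 q2_le.
(* [q <= 1 / sqrt 6 = 0.4082...] and the Taylor factor is [0.8557...]. *)
have q_le : q <= 4085 / 10000 by nra.
lra.
Qed.

Lemma normal_prob_nonneg_half (R : realType) (s : R) : s != 0 ->
  normal_prob 0 s [set x | 0 <= x] = (1 / 2 : R)%:E.
Proof.
move=> s0; set f := normal_pdf 0 s.
have f_even : f =1 f \o -%R.
  by move=> x; rewrite /f /= normal_pdfE // /normal_fun !subr0 sqrrN.
have := ge0_symfun_integralT (@normal_pdf_ge0 R 0 s)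
  (@continuous_normal_pdf R 0 s s0) f_even.
rewrite integral_normal_pdf -/(normal_prob 0 s _).
have : (0 <= normal_prob 0 s [set x | (0 <= x)%R])%E by [].
case: (normal_prob 0 s _) => [r _ /eqP| |] //.
  by rewrite -EFinM eqe => /eqP r_half; congr EFin; lra.
by rewrite mulry /= gtr0_sg // mul1e.
Qed.

Lemma normal_prob_sigma_tail_ge (R : realType) (s : R) : 0 < s ->
  ((15 / 100 : R)%:E <= normal_prob 0 s [set x | (s <= x)%R])%E.
Proof.
move=> s_gt0; have s0 : s != 0 by rewrite gt_eqF.
have ge0_split : [set x : R | 0 <= x] = `[0%R, s[ `|` [set x | s <= x].
  apply/seteqP; split => x /=; rewrite in_itv /=.
    by move=> x_ge0; have [x_lt_s|] := ltP x s; [left; rewrite x_ge0 | right].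
  by case=> [/andP[] // | /(le_trans (ltW s_gt0))].
have disj : `[0%R, s[ `&` [set x | s <= x] = set0.
  apply/seteqP; split => x //=; rewrite in_itv /=.
  by move=> -[/andP[_ /lt_le_trans x_lt] /x_lt]; rewrite ltxx.
have := normal_prob_nonneg_half s0.
rewrite ge0_split measureU //=; last by rewrite -set_itvcy.
have := normal_prob_itv0s_le s_gt0.
have : (0 <= normal_prob 0 s [set x | (s <= x)%R])%E by [].
have : (0 <= normal_prob 0 s `[0%R, s[)%E by [].
case: (normal_prob 0 s `[0%R, s[) => [a| |] //; case: (normal_prob 0 s _) => [b| |] //.
by rewrite !lee_fin => a_ge0 b_ge0 a_le /eqP; rewrite -EFinD eqe => /eqP; lra.
Qed.

Lemma emp_mean_notin (R : realType) N (G : {set 'I_N}) (Delta : R) S a t :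
  a \notin G -> emp_mean G Delta S a t = 0.
Proof.
move=> aG; rewrite /emp_mean; case: ifP => // _.
by rewrite big1 ?mul0r // => s _; rewrite /reward (negbTE aG).
Qed.

Lemma threshold_le_sample_sd (R : realType) (m N T t n : nat) :
  T%:R / 2 < t%:R :> R -> n%:R <= Lbound m N T :> R ->
  0 < (gapDelta N T : R) + gapDelta N T / 4 <= Num.sqrt (m%:R * ln (t%:R : R) / n.+1%:R).
Proof.
move=> tT; rewrite /Lbound.
set D : R := gapDelta N T; set lh := ln (T%:R / 2 : R); set lt := ln (t%:R : R).
move=> nL; have n1_le : n.+1%:R <= 16 * m%:R * lh / (25 * D ^+ 2).
  by rewrite -addn1 natrD; lra.
(* [D = 0] would make [Lbound] equal to [-1], since [x / 0 = 0]. *)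
have D_gt0 : 0 < D.
  rewrite lt_neqAle mulr_ge0 ?sqrtr_ge0 // andbT; apply/negP => /eqP D0.
  by move: n1_le; rewrite -D0 expr0n mulr0 invr0 mulr0 lern0.
have D2_gt0 : 0 < 25 * D ^+ 2 by rewrite mulr_gt0 // exprn_gt0.
have key : 25 * D ^+ 2 * n.+1%:R <= 16 * m%:R * lh by rewrite mulrC -ler_pdivlMr.
have lh_gt0 : 0 < lh.
  have : 0 < 25 * D ^+ 2 * n.+1%:R by rewrite mulr_gt0 ?ltr0n.
  have := ler0n R m.
  nra.
have lh_le_lt : lh <= lt.
  have T_gt1 : 1 < T%:R / 2 :> R.
    by rewrite ltNge; apply: contraTN lh_gt0 => /ln_le0; rewrite leNgt.
  have T_gt0 : 0 < T%:R / 2 :> R := lt_trans ltr01 T_gt1.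
  by rewrite ler_ln ?posrE ?ltW // (lt_trans T_gt0 tT).
have tau_gt0 : 0 < D + D / 4 by rewrite addr_gt0 // divr_gt0.
rewrite tau_gt0 /= -(ger0_norm (ltW tau_gt0)) -sqrtr_sqr ler_sqrt; last first.
  by rewrite divr_ge0 // mulr_ge0 // ltW // (lt_le_trans lh_gt0).
rewrite ler_pdivlMr ?ltr0n //.
have : m%:R * lh <= m%:R * lt by rewrite ler_wpM2l.
nra.
Qed.

Theorem lemma10 (R : realType) (N m T : nat) (G : {set 'I_N})
  (S : nat -> {set 'I_N}) (t : nat) (a : 'I_N) :
  (1 <= m)%N -> (400 * m <= N)%N -> #|G| = m ->
  (forall s, (1 <= s < t)%N -> #|S s| = m) ->
  (16 / 25 * N%:R * ln (T%:R : R) < T%:R) ->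
  (T%:R / 2 < (t%:R : R)) -> (t <= T)%N ->
  a \notin G -> ((npulls S a t)%:R <= Lbound m N T :> R) ->
  ((15 / 100 : R)%:E <=
     ctsg_sample_law m G (gapDelta N T) S a t
       [set x : R | (gapDelta N T + gapDelta N T / 4 <= x)%R])%E.
Proof.
move=> _ _ _ _ _ tT _ aG nL.
have /andP[tau_gt0 tau_le_sd] := threshold_le_sample_sd tT nL.
rewrite /ctsg_sample_law emp_mean_notin //.
apply: le_trans (normal_prob_sigma_tail_ge (lt_le_trans tau_gt0 tau_le_sd)) _.
apply: le_measure => [||x /=]; try by rewrite inE /= -set_itvcy.
exact: le_trans.
Qed.
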